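(* Let $\mathcal{G}=(\mathcal{V},\mathcal{E})$ be a DAG with treatment $A$ and outcome $Y$ as in the context, and $\mathcal{G}'=\mathcal{G}\setminus(A\to Y)$. Let $I\subseteq\mathcal{I}$ be a set of irrelevant variables, $Z\subseteq\mathcal{V}\setminus\{A,Y\}$, and $U\subseteq\mathcal{W}$ a set of extended confounding variables such that $Z\cup I\cup U$ is $(Z\cup I)$-irreducible for estimating $\tau$. Then in $\mathcal{G}'$: (i) $A\perp_{\mathcal{G}'}Y\mid Z\cup I\cup U$; (ii) $A\perp_{\mathcal{G}'}Y\mid Z\cup U$; hence $Z\cup I\cup U$ and $Z\cup U$ are valid adjustment sets. In $\mathcal{G}$: (a) $I\perp_{\mathcal{G}}Y\mid A\cup Z\cup U$; (b) $I\perp_{\mathcal{G}}U\mid Z$.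
   Context: $\mathcal{G}=(\mathcal{V},\mathcal{E})$ is a DAG containing treatment $A$ and outcome $Y$ with an edge $A\to Y$; variables follow a linear Gaussian SEM Markov and faithful to $\mathcal{G}$; no variable of $\mathcal{V}\setminus\{A,Y\}$ is a descendant of $A$. $\perp_{\mathcal{H}}$ denotes d-separation in graph $\mathcal{H}$. $\tau=\frac{\partial}{\partial a}E\{Y\mid do(A=a)\}$. A set $Z\subseteq\mathcal{V}\setminus\{A,Y\}$ is a valid adjustment set if the OLS estimator of the $A$-coefficient when regressing $Y$ on $A$ and $Z$ is unbiased for $\tau$ for every distribution Markov to $\mathcal{G}$ (equivalently here, $A\perp_{\mathcal{G}'}Y\mid Z$). For $K\subseteq Z$, a valid set $Z$ is $K$-irreducible if no proper subset $Z'\subsetneq Z$ with $K\subseteq Z'$ is valid. Irrelevant variables $\mathcal{I}$: $V\in\mathcal{V}\setminus\{A,Y\}$ such that in $\mathcal{G}'$, $V$ is d-separated from $Y$ given every $K\subseteq\mathcal{V}\setminus\{A,Y\}$. Extended confounding variables $\mathcal{W}$: $V\in\mathcal{V}\setminus\{A,Y\}$ d-connected in $\mathcal{G}'$ to $A$ given some $K\subseteq\mathcal{V}\setminus\{A,Y\}$ and to $Y$ given some $L\subseteq\mathcal{V}\setminus\{A,Y\}$. *)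

From mathcomp Require Import all_boot.
Set Implicit Arguments. Unset Strict Implicit. Unset Printing Implicit Defensive.

Section Graphs.
Variable V : finType.

(* A directed graph on V: [e x y] means there is an edge x -> y. *)
Definition acyclic (e : rel V) : Prop := forall x y, e x y -> ~~ connect e y x.

Definition adj (e : rel V) : rel V := fun x y => e x y || e y x.

Definition anc_of (e : rel V) (v : V) (Z : {set V}) : bool :=
  [exists z in Z, connect e v z].

Definition dconnected (e : rel V) (Z : {set V}) (x y : V) : Prop :=
  exists p : seq V,
    [/\ uniq (x :: p), path (adj e) x p, last x p = y &
      forall i, 0 < i -> i.+1 < size (x :: p) ->
        let a := nth x (x :: p) i.-1 in
        let b := nth x (x :: p) i in
        let c := nth x (x :: p) i.+1 in
        if e a b && e c b then anc_of e b Z else b \notin Z].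

Definition dsep (e : rel V) (X Y Z : {set V}) : Prop :=
  forall x y, x \in X -> y \in Y -> ~ dconnected e Z x y.

Definition remove_edge (e : rel V) (A Y : V) : rel V :=
  fun x y => e x y && ~~ ((x == A) && (y == Y)).

(* Valid adjustment set (graphical characterisation, cf. context:
   Z subset of V \ {A,Y} and A _||_ Y | Z in G'). *)
Definition valid_adj (e : rel V) (A Y : V) (Z : {set V}) : Prop :=
  Z \subset ~: [set A; Y] /\ dsep (remove_edge e A Y) [set A] [set Y] Z.

Definition irreducible (e : rel V) (A Y : V) (K Z : {set V}) : Prop :=
  K \subset Z /\ valid_adj e A Y Z /\
  forall Z' : {set V}, Z' \proper Z -> K \subset Z' -> ~ valid_adj e A Y Z'.

Definition irrelevant (e : rel V) (A Y : V) (v : V) : Prop :=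
  v \notin [set A; Y] /\
  forall K : {set V}, K \subset ~: [set A; Y] ->
    dsep (remove_edge e A Y) [set v] [set Y] K.

Definition ext_confounding (e : rel V) (A Y : V) (v : V) : Prop :=
  v \notin [set A; Y] /\
  (exists K : {set V}, K \subset ~: [set A; Y] /\
     dconnected (remove_edge e A Y) K v A) /\
  (exists L : {set V}, L \subset ~: [set A; Y] /\
     dconnected (remove_edge e A Y) L v Y).

End Graphs.

(* An irrelevant vertex has no path to Y in the skeleton of G that avoids A:
   conditioning on the colliders of a shortest such path would d-connect it to
   Y in G'.  (ii) A path of G' from A to Y open given Z ∪ U but blocked by
   Z ∪ I ∪ U is blocked at a non-collider in I, whose segment to Y avoids A.
   (a) A path of G from I to Y open given A ∪ Z ∪ U must pass through A, as a
   collider; its segment from A to Y is a path of G', and conditioning on the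
   end point A can be undone by rerouting through a directed path into A, so
   A and Y would be d-connected in G' given Z ∪ U.  (b) As A and Y have no
   descendants besides A and Y, neither lies inside a path from I to U open
   given Z, nor does A lie inside a path of G' from U to Y, so I would reach Y
   avoiding A. *)

From mathcomp Require Import all_boot.
Set Implicit Arguments.
Unset Strict Implicit.
Unset Printing Implicit Defensive.

Section Triples.
Variables (T : Type) (P : T -> T -> T -> bool).

Fixpoint all_triples (s : seq T) : bool :=
  if s is a :: t then
    if t is b :: c :: _ then P a b c && all_triples t else true
  else true.

Lemma all_triples_behead a s : all_triples (a :: s) -> all_triples s.
Proof. by case: s => [|b [|c s]] //= /andP []. Qed.

Lemma all_triples_catr s1 s2 : all_triples (s1 ++ s2) -> all_triples s2.
Proof. by elim: s1 => [|a s1 IH] //= /all_triples_behead. Qed.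

Lemma all_triplesP s :
  reflect (forall s1 a b c s2, s = s1 ++ [:: a, b, c & s2] -> P a b c)
          (all_triples s).
Proof.
apply: (iffP idP) => [ts s1 a b c s2 E | Ps].
  by move: ts; rewrite E => /all_triples_catr /andP [].
elim: s Ps => [|a [|b [|c s]] IH] Ps //=.
apply/andP; split; first exact: (Ps [::]).
by apply: IH => s1 a' b' c' s2 E; apply: (Ps (a :: s1)); rewrite E.
Qed.

Lemma all_triples_nthP x0 s :
  reflect (forall i, 0 < i -> i.+1 < size s ->
             P (nth x0 s i.-1) (nth x0 s i) (nth x0 s i.+1))
          (all_triples s).
Proof.
elim: s => [|a [|b [|c s]] IH]; try by apply: ReflectT => -[|[|[|i]]].
apply: (iffP andP) => [[Pabc /IH ts] [|[|i]] // _ /= i_lt | Ps].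
  exact: (ts i.+1).
by split; [exact: (Ps 1) | apply/IH => -[|i] // _ i_lt; exact: (Ps i.+2)].
Qed.

End Triples.

Lemma sub_all_triples_in (T : eqType) (P Q : T -> T -> T -> bool) s :
  (forall a b c, b \in behead s -> P a b c -> Q a b c) ->
  all_triples P s -> all_triples Q s.
Proof.
move=> PQ /all_triplesP Ps; apply/all_triplesP => s1 a b c s2 E.
apply: PQ (Ps _ _ _ _ _ E); rewrite E.
by case: s1 {E} => [|x s1] /=; rewrite ?mem_head // mem_cat !inE eqxx !orbT.
Qed.

Lemma split_last_has (T : Type) (P : pred T) s : has P s ->
  exists s1 v t, [/\ s = s1 ++ v :: t, P v & ~~ has P t].
Proof.
elim/last_ind: s => [|s z IH] //; rewrite has_rcons.
case Pz: (P z) => /=; first by exists s, z, [::]; rewrite cats1.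
case/IH => s1 [v [t [-> Pv tNP]]].
by exists s1, v, (rcons t z); rewrite rcons_cat has_rcons Pz.
Qed.

Lemma interior_split (T : eqType) (x v : T) p :
  v \in x :: p -> v != x -> v != last x p ->
  exists s1 a c s2, x :: p = s1 ++ [:: a, v, c & s2].
Proof.
rewrite inE => /predU1P [-> | /splitPr [p1 p2]]; first by rewrite eqxx.
rewrite last_cat /=; case: p2 => [|c s2] _ /=; first by rewrite eqxx.
by exists (belast x p1), (last x p1), c, s2; rewrite -[in RHS]cat_rcons -lastI.
Qed.

Lemma head_notin_suffix (T : eqType) (x : T) p s1 a t :
  uniq (x :: p) -> x :: p = s1 ++ a :: t -> x \notin t.
Proof.
move=> /andP [xp _]; case: s1 => [|y s1] [_ pE]; rewrite pE in xp => //.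
by move: xp; rewrite mem_cat inE !negb_or => /and3P [].
Qed.

Lemma path_suffix (T : Type) (r : rel T) x p s1 v t :
  x :: p = s1 ++ v :: t -> path r x p -> path r v t.
Proof.
case: s1 => [|y s1] [-> ->] //.
by rewrite cat_path => /andP [_ /= /andP []].
Qed.

Lemma last_suffix (T : Type) (x : T) p s1 v t :
  x :: p = s1 ++ v :: t -> last x p = last v t.
Proof. by move=> E; rewrite -[last x p]/(last x (x :: p)) E last_cat. Qed.

Lemma last_rev_belast (T : Type) (x : T) p :
  last (last x p) (rev (belast x p)) = x.
Proof. by case: p => //= y p; rewrite rev_cons last_rcons. Qed.

Lemma path_connect_last (T : finType) (r : rel T) x p w :
  path r x p -> w \in x :: p -> connect r w (last x p).
Proof.
move=> pp wp; case/splitPl: wp pp => p1 p2 <-.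
by rewrite cat_path last_cat => /andP [_ pp2]; apply/connectP; exists p2.
Qed.

Section DSeparation.
Variable V : finType.
Implicit Types (g e : rel V) (K S I : {set V}) (x y v w : V) (p : seq V).

Definition active_triple g K (a b c : V) : bool :=
  if g a b && g c b then anc_of g b K else b \notin K.

Definition active_path g K x p : bool :=
  [&& uniq (x :: p), path (adj g) x p
    & all_triples (active_triple g K) (x :: p)].

Lemma dconnectedE g K x y :
  dconnected g K x y <-> exists2 p, active_path g K x p & last x p = y.
Proof.
split=> [[p [up pp py /(all_triples_nthP (active_triple g K)) tp]] |
         [p /and3P [up pp /(all_triples_nthP _ x) tp] py]].
  by exists p; rewrite // /active_path up pp.
by exists p; split.
Qed.

Lemma anc_of_mem g K v : v \in K -> anc_of g v K.
Proof. by move=> vK; apply/existsP; exists v; rewrite vK connect0. Qed.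

Lemma anc_of_subset g K K' v : K \subset K' -> anc_of g v K -> anc_of g v K'.
Proof.
move=> KK' /existsP [z /andP [zK vz]]; apply/existsP; exists z.
by rewrite (subsetP KK' z zK).
Qed.

Lemma anc_of_connect g K u v : connect g u v -> anc_of g v K -> anc_of g u K.
Proof.
move=> uv /existsP [z /andP [zK vz]]; apply/existsP; exists z.
by rewrite zK (connect_trans uv vz).
Qed.

Lemma anc_of_setU1 g K x v :
  anc_of g v (x |: K) = connect g v x || anc_of g v K.
Proof.
apply/existsP/orP => [[z /andP [/setU1P [-> | zK] vz]] |
                      [vx | /existsP [z /andP [zK vz]]]].
- by left.
- by right; apply/existsP; exists z; rewrite zK.
- by exists x; rewrite setU11.
- by exists z; rewrite setU1r.
Qed.

Lemma connect_sink g v w : (forall z, ~~ g v z) -> connect g v w = (w == v).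
Proof.
move=> vsink; apply/connectP/eqP => [[[|z p] /= ] | ->]; last by exists [::].
- by move=> _ ->.
- by rewrite (negbTE (vsink z)).
Qed.

Lemma anc_of_sink g K v : (forall z, ~~ g v z) -> anc_of g v K = (v \in K).
Proof.
move=> vsink; apply/existsP/idP => [[z /andP [zK]] | /anc_of_mem/existsP //].
by rewrite connect_sink // => /eqP <-.
Qed.

Lemma active_path_suffix g K x p s1 v t :
  active_path g K x p -> x :: p = s1 ++ v :: t -> active_path g K v t.
Proof.
move=> /and3P [up pp tp] E; apply/and3P; split.
- by move: up; rewrite E cat_uniq => /and3P [].
- exact: path_suffix E pp.
- by move: tp; rewrite E => /all_triples_catr.
Qed.

Lemma active_path_notin g K x p v :
  active_path g K x p -> v != x -> v != last x p ->
  {in x :: p, forall w, ~~ g v w} -> ~~ anc_of g v K -> v \notin x :: p.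
Proof.
move=> ap vx vl nochild; apply: contra => vp.
have [s1 [a [c [s2 E]]]] := interior_split vp vx vl.
have /and3P [_ /= /and3P [av vc _] /andP [tr _]] := active_path_suffix ap E.
have [ap' cp] : a \in x :: p /\ c \in x :: p.
  by rewrite E !(mem_cat, inE) !eqxx !orbT.
rewrite /adj (negbTE (nochild a ap')) orbF in av.
rewrite /adj (negbTE (nochild c cp)) /= in vc.
by rewrite /active_triple av vc in tr.
Qed.

Definition adj_avoid g (A : V) : rel V :=
  fun x y => [&& x != A, y != A & adj g x y].

Lemma path_adj_avoidE g A x p : x != A ->
  path (adj_avoid g A) x p = path (adj g) x p && (A \notin p).
Proof.
elim: p x => [|y p IH] x xA //=.
rewrite inE negb_or (eq_sym A); case: (eqVneq y A) => [-> | yA] /=.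
  by rewrite /adj_avoid eqxx !andbF.
by rewrite IH // {1}/adj_avoid xA yA andbA.
Qed.

Lemma connect_adj_avoid g A x p :
  A \notin x :: p -> path (adj g) x p -> connect (adj_avoid g A) x (last x p).
Proof.
rewrite inE negb_or eq_sym => /andP [xA Ap] pp.
by apply/connectP; exists p; rewrite ?path_adj_avoidE ?pp.
Qed.

Lemma connect_adj_avoid_dconnected g A x y : x != A ->
  connect (adj_avoid g A) x y ->
  exists2 K : {set V}, K \subset ~: [set A; y] & dconnected g K x y.
Proof.
move=> xA /connectP [p0 p0P ->{y}]; case: (shortenP p0P) => p.
rewrite path_adj_avoidE // => /andP [pP Ap] up _.
(* Condition on exactly the colliders of a shortest such path. *)
pose collider b := let i := index b (x :: p) in
  g (nth x (x :: p) i.-1) b && g (nth x (x :: p) i.+1) b.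
exists [set b | [&& b != A, b != last x p & collider b]].
  by apply/subsetP => b; rewrite !inE negb_or => /and3P [-> -> _].
exists p; split => // j j0 js /=.
have jidx : index (nth x (x :: p) j) (x :: p) = j := index_uniq x (ltnW js) up.
have collj : collider (nth x (x :: p) j) =
    g (nth x (x :: p) j.-1) (nth x (x :: p) j) &&
    g (nth x p j) (nth x (x :: p) j).
  by rewrite /collider jidx.
case: ifP => [coll | ncoll]; last by rewrite inE collj ncoll !andbF.
apply/anc_of_mem; rewrite inE collj coll andbT; apply/andP; split.
  apply: contraNneq Ap => <-; case: j j0 js {jidx coll collj} => // j _ js.
  exact/mem_nth/ltnW.
rewrite -[last x p]/(last x (x :: p)) -nth_last nth_uniq //=.
- by rewrite neq_ltn -ltnS js.
- exact: ltnW.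
Qed.

Lemma acyclic_asym g a b : acyclic g -> g a b -> ~~ g b a.
Proof. by move=> acyc ab; apply: contra (acyc a b ab); apply: connect1. Qed.

Lemma all_triples_catrev g K v d t :
  acyclic g -> path g v d -> {in v :: d, forall w, w \notin K} ->
  all_triples (active_triple g K) (v :: t) ->
  all_triples (active_triple g K) (rev (v :: d) ++ t).
Proof.
move=> acyc; elim: d v t => [|w d IH] v t //= /andP [vw wd] notK vt.
rewrite rev_cons cat_rcons; apply: IH => // [u ud|].
  by apply: notK; rewrite inE ud orbT.
case: t vt => [|c t] //= ->; rewrite andbT /active_triple.
by rewrite (negbTE (acyclic_asym acyc vw)) /=; apply: notK; rewrite mem_head.
Qed.

Lemma active_path_splice g K v d t :
  acyclic g -> uniq (v :: d) -> path g v d ->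
  {in v :: d, forall w, (w \notin K) && (w \notin t)} ->
  active_path g K v t -> active_path g K (last v d) (rev (belast v d) ++ t).
Proof.
move=> acyc ud dP dOK /and3P [/= /andP [_ ut] tP tT].
have E : last v d :: rev (belast v d) ++ t = rev (v :: d) ++ t.
  by rewrite [v :: d]lastI rev_rcons.
apply/and3P; split.
- rewrite E cat_uniq rev_uniq ud ut andbT; apply/hasPn => w wt.
  by rewrite mem_rev; apply: contraL wt => /dOK /andP [].
- rewrite cat_path rev_path last_rev_belast tP andbT.
  by apply: sub_path dP => a b ab; rewrite /adj ab orbT.
- by rewrite E; apply: all_triples_catrev => // w /dOK /andP [].
Qed.

Lemma dconnected_setU1_source g K x y :
  acyclic g -> dconnected g (x |: K) x y -> dconnected g K x y.
Proof.
move=> acyc /dconnectedE [p ap <-{y}]; apply/dconnectedE.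
have [xK | xNK] := boolP (anc_of g x K).
  exists p => //; case/and3P: ap => up pP tT; rewrite /active_path up pP /=.
  apply: sub_all_triples_in tT => a b c _; rewrite /active_triple anc_of_setU1.
  case: ifP => _; last by rewrite in_setU1 negb_or => /andP [].
  by case/orP => // /anc_of_connect; apply.
(* Reroute the path through the last vertex v that is an ancestor of x but
   not of K: its prefix up to v is replaced by a reversed directed path from v
   to x, whose vertices are all non-colliders outside K. *)
pose P w := connect g w x && ~~ anc_of g w K.
have [s1 [v [t [E /andP [vx vNK] tNP]]]] : exists s1 v t,
    [/\ x :: p = s1 ++ v :: t, P v & ~~ has P t].
  by apply: split_last_has; rewrite /= /P connect0 xNK.
case/connectP: vx => _ /shortenP [d dP ud _] dx.
have tK w : w \in t -> connect g w x -> anc_of g w K.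
  by move=> wt wx; apply: contraR (hasPn tNP w wt) => wNK; rewrite /P wx.
have dNK w : w \in v :: d -> ~~ anc_of g w K.
  by move=> /(path_connect dP) vw; apply: contra vNK; apply: anc_of_connect.
have d_to_x w : w \in v :: d -> connect g w x.
  by rewrite dx; apply: path_connect_last.
have apt : active_path g K v t.
  have /and3P [ut tP tT] := active_path_suffix ap E.
  rewrite /active_path ut tP /=; apply: sub_all_triples_in tT => a b c bt.
  rewrite /active_triple anc_of_setU1 in_setU1 negb_or.
  case: ifP => _; last by case/andP.
  by case/orP => // /(tK b bt).
exists (rev (belast v d) ++ t).
  rewrite dx; apply: active_path_splice => // w wd.
  have wNK := dNK w wd; rewrite (contra (@anc_of_mem g K w) wNK) /=.
  by apply: contra wNK => /tK; apply; apply: d_to_x.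
by rewrite last_cat {1}dx last_rev_belast (last_suffix E).
Qed.

Section RemoveEdge.
Variables (e : rel V) (a b : V).
Local Notation g := (remove_edge e a b).

Lemma acyclic_remove_edge : acyclic e -> acyclic g.
Proof.
move=> acyc x y /andP [xy _]; apply: contra (acyc x y xy).
by apply: connect_sub => u v /andP [uv _]; apply: connect1.
Qed.

Lemma adj_avoid_remove_edge : adj_avoid g a =2 adj_avoid e a.
Proof.
move=> x y; rewrite /adj_avoid /adj /remove_edge.
by case: (eqVneq x a); case: (eqVneq y a); rewrite ?andbT.
Qed.

Lemma path_adj_remove_edge x p :
  a \notin x :: p -> path (adj e) x p -> path (adj g) x p.
Proof.
rewrite inE negb_or eq_sym => /andP [xa ap] pP.
have : path (adj_avoid g a) x p.
  by rewrite (eq_path adj_avoid_remove_edge) path_adj_avoidE ?pP.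
by rewrite path_adj_avoidE // => /andP [].
Qed.

Hypothesis b_sink : forall z, ~~ e b z.

Lemma connect_remove_edge u v : v != b -> connect e u v -> connect g u v.
Proof.
move=> vb /connectP [p pP vE]; subst v.
elim: p u pP vb => [|w p IH] u //= /andP [uw wp] lb.
apply: connect_trans (connect1 _) (IH _ wp lb); rewrite /remove_edge uw /=.
apply: contra lb => /andP [_ /eqP wb]; move: wp; rewrite wb.
by case: p {IH} => [|z p] /=; [rewrite eqxx | rewrite (negbTE (b_sink z))].
Qed.

Lemma active_triple_remove_edge K u v w : b \notin K ->
  active_triple e K u v w -> active_triple g K u v w.
Proof.
move=> bK; rewrite /active_triple.
have [-> | vb] := eqVneq v b.
  case: (boolP (g u b && g w b)) => [|_ _ //].
  case/andP => /andP [ub _] /andP [wb _].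
  by rewrite ub wb anc_of_sink // (negbTE bK).
have gE y : g y v = e y v by rewrite /remove_edge (negbTE vb) andbF andbT.
rewrite !gE; case: ifP => // _ /existsP [z /andP [zK vz]].
apply/existsP; exists z; rewrite zK connect_remove_edge //.
by apply: contraNneq bK => <-.
Qed.

End RemoveEdge.

Lemma irrelevant_adj_avoid e A Y v :
  irrelevant e A Y v -> ~ connect (adj_avoid e A) v Y.
Proof.
case=> /[!inE] /norP [vA _] vsep.
rewrite -(eq_connect (adj_avoid_remove_edge e A Y)).
case/(connect_adj_avoid_dconnected vA) => K KAY.
exact: vsep K KAY v Y (set11 v) (set11 Y).
Qed.

Lemma dsep_setU_irrelevant e A Y S I :
  (forall v, v \in I -> irrelevant e A Y v) ->
  dsep (remove_edge e A Y) [set A] [set Y] (S :|: I) ->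
  dsep (remove_edge e A Y) [set A] [set Y] S.
Proof.
move=> Iirr sepSI _ _ /set1P -> /set1P -> /dconnectedE [p ap pY].
apply: (sepSI A Y (set11 A) (set11 Y)); apply/dconnectedE; exists p => //.
case/and3P: ap => up pP /all_triplesP tT; rewrite /active_path up pP !andTb.
apply/all_triplesP => s1 a b c s2 E; move: (tT s1 a b c s2 E).
rewrite /active_triple; case: ifP => [_ | _ bS].
  by apply: anc_of_subset; apply: subsetUl.
(* b is a non-collider in I: its segment to Y avoids A. *)
rewrite in_setU negb_or bS /=; apply/negP => /Iirr /irrelevant_adj_avoid; apply.
have E' : A :: p = rcons s1 a ++ b :: c :: s2 by rewrite cat_rcons.
have := connect_adj_avoid (head_notin_suffix up E) (path_suffix E' pP).
by rewrite -(last_suffix E') pY (eq_connect (adj_avoid_remove_edge e A Y)).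
Qed.

End DSeparation.

Section SourceOutcome.
Variables (V : finType) (e : rel V) (A Y : V).
Hypotheses (e_acyclic : acyclic e) (AY : A != Y) (eAY : e A Y)
  (no_desc : forall v, v != A -> v != Y -> ~ connect e A v).
Local Notation g := (remove_edge e A Y).
Implicit Types (K S I Z U : {set V}).

Lemma source_children v : e A v -> v = Y.
Proof.
move=> Av; case: (eqVneq v Y) => // vY; case: (eqVneq v A) => [vA | vA].
  by move: (e_acyclic Av); rewrite vA connect0.
by case: (no_desc vA vY); apply: connect1.
Qed.

Lemma outcome_sink v : ~~ e Y v.
Proof.
apply/negP => Yv; case: (eqVneq v A) => [vA | vA].
  by move: (e_acyclic eAY); rewrite -vA (connect1 Yv).
case: (eqVneq v Y) => [vY | vY].
  by move: (e_acyclic Yv); rewrite vY connect0.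
by case: (no_desc vA vY); apply: connect_trans (connect1 eAY) (connect1 Yv).
Qed.

Lemma remove_edge_source_sink v : ~~ g A v.
Proof. by apply/negP => /andP [/source_children ->]; rewrite !eqxx. Qed.

Lemma anc_of_source K : A \notin K -> Y \notin K -> ~~ anc_of e A K.
Proof.
move=> AK YK; apply/existsP => -[z /andP [zK Az]].
case: (eqVneq z A) => [zA | zA]; first by move: AK; rewrite -zA zK.
case: (eqVneq z Y) => [zY | zY]; first by move: YK; rewrite -zY zK.
exact: no_desc zA zY Az.
Qed.

Lemma dsep_irrelevant_outcome S I :
  Y \notin S -> (forall v, v \in I -> irrelevant e A Y v) ->
  dsep g [set A] [set Y] S -> dsep e I [set Y] (A |: S).
Proof.
move=> YS Iirr sepS x _ xI /set1P -> /dconnectedE [p ap pY].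
have [/[!inE] /norP [xA _] _] := Iirr x xI.
have [Ap | Anp] := boolP (A \in x :: p); last first.
  apply: (irrelevant_adj_avoid (Iirr x xI)); rewrite -pY.
  by apply: (connect_adj_avoid Anp); case/and3P: ap.
have Ax : A != x by rewrite eq_sym.
have Al : A != last x p by rewrite pY.
have [s1 [a [c [s2 E]]]] := interior_split Ap Ax Al.
have /and3P [_ _ /andP [aAc _]] := active_path_suffix ap E.
(* A is conditioned on, so it is a collider; its segment to Y lies in G'. *)
have cA : e c A.
  by move: aAc; rewrite /active_triple setU11; case: (e c A); rewrite ?andbF.
have E' : x :: p = rcons s1 a ++ A :: c :: s2 by rewrite cat_rcons.
have /and3P [uA pA tA] := active_path_suffix ap E'.
have Acs2 : A \notin c :: s2 by case/andP: uA.
apply: (sepS A Y (set11 A) (set11 Y)); apply: dconnected_setU1_source.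
  exact: acyclic_remove_edge.
apply/dconnectedE; exists (c :: s2); last by rewrite -(last_suffix E').
have gcA : g c A by rewrite /remove_edge cA (negbTE AY) andbF.
apply/and3P; split => //.
- apply/andP; split; first by rewrite /adj gcA orbT.
  by apply: path_adj_remove_edge => //; case/andP: pA.
- apply: sub_all_triples_in tA => u v w _; apply: active_triple_remove_edge.
    exact: outcome_sink.
  by rewrite in_setU1 negb_or eq_sym AY.
Qed.

Lemma dsep_irrelevant_confounding Z I U :
  Z \subset ~: [set A; Y] -> (forall v, v \in I -> irrelevant e A Y v) ->
  (forall v, v \in U -> ext_confounding e A Y v) -> dsep e I U Z.
Proof.
move=> ZAY Iirr Uconf x u xI uU /dconnectedE [p ap pu].
have [/[!inE] /norP [xA xY] _] := Iirr x xI.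
have [/[!inE] /norP [uA uY] [_ [L [LAY /dconnectedE [q aq qY]]]]] := Uconf u uU.
have [AZ YZ] : A \notin Z /\ Y \notin Z.
  by split; apply/negP => /(subsetP ZAY); rewrite !inE eqxx ?orbT.
have AL : A \notin L by apply/negP => /(subsetP LAY); rewrite !inE eqxx.
have Yp : Y \notin x :: p.
  apply: (active_path_notin ap); first by rewrite eq_sym.
  - by rewrite pu eq_sym.
  - by move=> w _; apply: outcome_sink.
  - by rewrite anc_of_sink //; apply: outcome_sink.
have Ap : A \notin x :: p.
  apply: (active_path_notin ap); first by rewrite eq_sym.
  - by rewrite pu eq_sym.
  - by move=> w wp; apply/negP => /source_children wY; rewrite -wY wp in Yp.
  - exact: anc_of_source.
have Aq : A \notin u :: q.
  apply: (active_path_notin aq); first by rewrite eq_sym.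
  - by rewrite qY.
  - by move=> w _; apply: remove_edge_source_sink.
  - by rewrite anc_of_sink //; apply: remove_edge_source_sink.
have x_to_u : connect (adj_avoid e A) x u.
  by rewrite -pu; apply: (connect_adj_avoid Ap); case/and3P: ap.
have u_to_Y : connect (adj_avoid e A) u Y.
  have /and3P [_ qP _] := aq; move: (connect_adj_avoid Aq qP).
  by rewrite qY (eq_connect (adj_avoid_remove_edge e A Y)).
exact: irrelevant_adj_avoid (Iirr x xI) (connect_trans x_to_u u_to_Y).
Qed.

End SourceOutcome.

Theorem lemmaB6 (V : finType) (e : rel V) (A Y : V) (I Z U : {set V}) :
  acyclic e -> A != Y -> e A Y ->
  (forall v, v != A -> v != Y -> ~ connect e A v) ->
  (forall v, v \in I -> irrelevant e A Y v) ->
  Z \subset ~: [set A; Y] ->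
  (forall v, v \in U -> ext_confounding e A Y v) ->
  irreducible e A Y (Z :|: I) (Z :|: I :|: U) ->
  [/\ dsep (remove_edge e A Y) [set A] [set Y] (Z :|: I :|: U),
      dsep (remove_edge e A Y) [set A] [set Y] (Z :|: U),
      valid_adj e A Y (Z :|: I :|: U) /\ valid_adj e A Y (Z :|: U),
      dsep e I [set Y] (A |: (Z :|: U)) &
      dsep e I U Z].
Proof.
move=> acyc AY eAY no_desc Iirr ZAY Uconf [_ [[SAY sepS] _]].
have sepZU : dsep (remove_edge e A Y) [set A] [set Y] (Z :|: U).
  by apply: (dsep_setU_irrelevant Iirr); rewrite setUAC.
have ZUAY : Z :|: U \subset ~: [set A; Y].
  by apply: subset_trans SAY; rewrite setUAC subsetUl.
have YZU : Y \notin Z :|: U.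
  by apply/negP => /(subsetP ZUAY); rewrite !inE eqxx orbT.
split => //.
- exact: (dsep_irrelevant_outcome acyc AY eAY no_desc YZU Iirr sepZU).
- exact: (dsep_irrelevant_confounding acyc AY eAY no_desc ZAY Iirr Uconf).
Qed.
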